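(* Let $r,q$ be positive integers, $k\ge1$ and $p_1,\dots,p_k\ge1$ integers. For an integer vector $y=\langle s_1;a_{11},\dots,a_{1p_1}:\cdots:s_k;a_{k1},\dots,a_{kp_k}\,|\,\nu\rangle\in\mathbb{Z}^{k+1+\sum_i p_i}$ (entries $s_i,a_{ij},\nu$ arbitrary integers, possibly negative) and an integer $n$, define $$h(n,y)=\left\lceil\frac{rn}{q}\right\rceil-\sum_{i=1}^k\left\lceil\frac{r\left(n-s_i-\sum_{j=1}^{p_i}\left\lceil\frac{r(n-a_{ij})}{q}\right\rceil\right)}{q}\right\rceil-\nu.$$ Let $\sim$ be the equivalence relation on such vectors generated by the moves: (i) for some fixed $i,j$ and some $d\in\mathbb{Z}$, replace $s_i$ by $s_i+dr$ and $a_{ij}$ by $a_{ij}+dq$ (all other entries unchanged); (ii) for some fixed $i$ and some $c\in\mathbb{Z}$, replace $s_i$ by $s_i+cq$ and $\nu$ by $\nu+cr$ (all other entries unchanged). If $y\sim y'$, then $h(n,y)=h(n,y')$ for every integer $n$. *)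

From Stdlib Require Import ZArith List Relations.
Import ListNotations.
Open Scope Z_scope.

(* ceiling of a/b for b > 0 *)
Definition zceil (a b : Z) : Z := - ((- a) / b).

(* A vector y = < s_1; a_11..a_1p1 : ... : s_k; a_k1..a_kpk | nu >
   is represented by the list of blocks (s_i, [a_i1; ...; a_ipi]) and nu. *)
Record yvec := mkY { blocks : list (Z * list Z); nu : Z }.

Definition good_shape (y : yvec) : Prop :=
  blocks y <> [] /\ Forall (fun b => snd b <> []) (blocks y).

Definition h (r q : Z) (n : Z) (y : yvec) : Z :=
  zceil (r * n) q
  - fold_right Z.add 0
      (map (fun b : Z * list Z =>
              zceil (r * (n - fst b
                          - fold_right Z.add 0
                              (map (fun a => zceil (r * (n - a)) q) (snd b)))) q)
           (blocks y))
  - nu y.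

Inductive move (r q : Z) : yvec -> yvec -> Prop :=
| move_i : forall (B1 B2 : list (Z * list Z)) (s : Z) (A1 A2 : list Z) (a nu0 d : Z),
    move r q (mkY (B1 ++ (s, A1 ++ a :: A2) :: B2) nu0)
             (mkY (B1 ++ (s + d * r, A1 ++ (a + d * q) :: A2) :: B2) nu0)
| move_ii : forall (B1 B2 : list (Z * list Z)) (s : Z) (A : list Z) (nu0 c : Z),
    move r q (mkY (B1 ++ (s, A) :: B2) nu0)
             (mkY (B1 ++ (s + c * q, A) :: B2) (nu0 + c * r)).

Definition equiv_y (r q : Z) : yvec -> yvec -> Prop :=
  clos_refl_sym_trans yvec (move r q).

From Stdlib Require Import ZArith List Relations Lia.
Open Scope Z_scope.

(* Each move changes one inner or outer ceiling argument by a multiple of [q]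
   (namely [-d r q] or [-c r q]), so the ceiling drops by exactly that multiple
   divided by [q], and this drop is compensated by the simultaneous change of
   [s_i] (move (i)) or of [nu] (move (ii)). *)

Lemma zceil_addMr (x m q : Z) : q <> 0 -> zceil (x + m * q) q = zceil x q + m.
Proof.
  intros Hq; unfold zceil.
  replace (- (x + m * q)) with (- x + - m * q) by ring.
  rewrite Z.div_add by exact Hq; ring.
Qed.

Lemma sum_map_app_cons {A : Type} (f : A -> Z) (l1 : list A) (x : A) (l2 : list A) :
  fold_right Z.add 0 (map f (l1 ++ x :: l2)) =
  fold_right Z.add 0 (map f l1) + f x + fold_right Z.add 0 (map f l2).
Proof. induction l1 as [|b l1 IH]; simpl; lia. Qed.

Lemma h_move (r q : Z) (y y' : yvec) :
  q <> 0 -> move r q y y' -> forall n : Z, h r q n y = h r q n y'.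
Proof.
  intros Hq Hmove n; destruct Hmove; unfold h; simpl;
    rewrite !sum_map_app_cons; simpl.
  - rewrite !sum_map_app_cons.
    replace (r * (n - (a + d * q))) with (r * (n - a) + - (d * r) * q) by ring.
    rewrite zceil_addMr by exact Hq.
    (* only the ceiling of the moved block differs; peel down to its argument *)
    do 5 f_equal; ring.
  - match goal with |- context [zceil (r * (n - (s + c * q) - ?S)) q] =>
      replace (r * (n - (s + c * q) - S)) with (r * (n - s - S) + - (c * r) * q)
        by ring end.
    rewrite zceil_addMr by exact Hq; ring.
Qed.

Theorem theorem2 (r q : Z) (y y' : yvec) :
  0 < r -> 0 < q ->
  good_shape y ->
  equiv_y r q y y' ->
  forall n : Z, h r q n y = h r q n y'.
Proof.
  intros _ Hq _ Hequiv.
  induction Hequiv as [y y' Hmove | y | y y' _ IH | y y' y'' _ IH1 _ IH2]; intros n.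
  - apply h_move; [lia | exact Hmove].
  - reflexivity.
  - now rewrite IH.
  - now rewrite IH1, IH2.
Qed.
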